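(* Let $n\ge2$, $0\le\delta<\frac1n$, let $P^0=[d_1\ \cdots\ d_{n+1}]$ be the canonical uniform simplex, and let $P^\delta=[d_1^\delta\ \cdots\ d^\delta_{n+1}]$ with $d_1^\delta=d_1$ and $d_i^\delta=\alpha(d_i+\delta e_1)$ for $2\le i\le n+1$, where $\alpha=\frac{n}{\sqrt{n^2\delta^2-2n\delta+n^2}}$ and $\beta=\alpha^2\frac{n\delta^2-2\delta-1}{n}$. Let $B$ be the matrix with columns $d_2^\delta,\dots,d_{n+1}^\delta$ (in this order), and for $i\in\{2,\dots,n+1\}$ let $T$ be the matrix whose columns are the vectors $d_1^\delta,\dots,d_{n+1}^\delta$ with $d_i^\delta$ removed, in increasing index order. For a matrix $S$ write $\mathcal G(S)=S^\top S$. Then: (i) for any choice of $i\in\{2,\dots,n+1\}$, $\mathcal G(T)$ is the $n\times n$ matrix with all diagonal entries $1$, all other entries in the first row and first column equal to $\lambda=\alpha\left(-\frac1n+\delta\right)$, and all remaining off-diagonal entries equal to $\beta$; (ii) $\mathcal G(B)^{-1}=\frac{1}{1-\beta}I-\frac{\beta}{(1-\beta)^2\left(1+\frac{\beta n}{1-\beta}\right)}e^{n\times n}$; (iii) $\mathcal G(T)^{-1}=M^{-1}\mathcal G(B)^{-1}M^{-\top}$, where $$M^{-1}=\begin{bmatrix}-\alpha(1-\delta n) & \mathbf 0^{1\times(n-1)}\\ -e^{(n-1)\times1} & I^{(n-1)\times(n-1)}\end{bmatrix}.$$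
   Context: The canonical uniform simplex is the $n\times(n+1)$ matrix $P^0$ defined as follows, with $a_i=\sqrt{\frac{(n-i+1)(n+1)}{n(n-i+2)}}$ for $i=1,\dots,n$: for $1\le j\le n$, column $j$ has entry $-\frac{a_i}{n-i+1}$ in row $i<j$, entry $a_j$ in row $j$, and $0$ in rows $i>j$; column $n+1$ has entry $-\frac{a_i}{n-i+1}$ in every row $i$. $e_1$ is the first standard basis vector; $e^{m\times k}$ is the $m\times k$ all-ones matrix; $M^{-\top}=(M^{-1})^\top$. *)

From HB Require Import structures.
From mathcomp Require Import all_boot all_order all_algebra.
Set Implicit Arguments. Unset Strict Implicit. Unset Printing Implicit Defensive.
Import Order.TTheory GRing.Theory Num.Theory.
Local Open Scope ring_scope.

(* Indices are 0-based: row i' : 'I_n stands for row i = i'+1 of the paper,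
   column j' : 'I_n.+1 stands for column j = j'+1. *)

Definition simplex_a (R : rcfType) (n : nat) (i' : nat) : R :=
  Num.sqrt (((n - i')%:R * (n.+1)%:R) / (n%:R * (n - i').+1%:R)).

Definition P0 (R : rcfType) (n : nat) : 'M[R]_(n, n.+1) :=
  \matrix_(i < n, j < n.+1)
    if (j < n)%N then
      (if (i < j)%N then - simplex_a R n i / (n - i)%:R
       else if i == j :> nat then simplex_a R n i else 0)
    else - simplex_a R n i / (n - i)%:R.

Definition alpha (R : rcfType) (n : nat) (delta : R) : R :=
  n%:R / Num.sqrt (n%:R ^+ 2 * delta ^+ 2 - 2 * n%:R * delta + n%:R ^+ 2).

Definition beta (R : rcfType) (n : nat) (delta : R) : R :=
  alpha n delta ^+ 2 * ((n%:R * delta ^+ 2 - 2 * delta - 1) / n%:R).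

Definition lambda (R : rcfType) (n : nat) (delta : R) : R :=
  alpha n delta * (- n%:R^-1 + delta).

Definition Pdelta (R : rcfType) (n : nat) (delta : R) : 'M[R]_(n, n.+1) :=
  \matrix_(i < n, j < n.+1)
    if j == ord0 then P0 R n i j
    else alpha n delta * (P0 R n i j + (if i == 0 :> nat then delta else 0)).

Definition Bmat (R : rcfType) (n : nat) (delta : R) : 'M[R]_n :=
  \matrix_(i < n, j < n) Pdelta n delta i (lift ord0 j).

Definition Tmat (R : rcfType) (n : nat) (delta : R) (k : 'I_n.+1) : 'M[R]_n :=
  \matrix_(i < n, j < n) Pdelta n delta i (lift k j).

Definition gram (R : rcfType) (m n : nat) (S : 'M[R]_(m, n)) : 'M[R]_n :=
  S^T *m S.

Definition Minv (R : rcfType) (n : nat) (delta : R) : 'M[R]_n :=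
  \matrix_(i < n, j < n)
    if i == 0 :> nat then
      (if j == 0 :> nat then - alpha n delta * (1 - delta * n%:R) else 0)
    else if j == 0 :> nat then -1 else (i == j)%:R.

From HB Require Import structures.
From mathcomp Require Import all_boot all_order all_algebra.
From mathcomp Require Import ring lra.
Set Implicit Arguments. Unset Strict Implicit. Unset Printing Implicit Defensive.
Import Order.TTheory GRing.Theory Num.Theory.
Local Open Scope ring_scope.

(** The columns d_j of P^0 are unit vectors with pairwise inner products -1/n,
    the first of them is e_1, and they sum to zero.  Hence G(P^delta) has unit
    diagonal, lambda between d_1^delta and the other columns and beta
    elsewhere; this gives (i), and G(B) = (1 - beta) I + beta J, which is
    inverted by the Sherman-Morrison formula (ii).  For (iii), the zero-sum
    relation shows that the first column of T M^-1 is the removed column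
    d_k^delta while the others are those of T, so T M^-1 is B with permuted
    columns and M^-T G(T) M^-1 = G(T M^-1) = G(B). *)

Lemma mulmx1_invmx (R : comUnitRingType) n (A B : 'M[R]_n) :
  A *m B = 1%:M -> A \in unitmx /\ invmx A = B.
Proof.
move=> AB1; have [uA _] := mulmx1_unit AB1; split => //.
by rewrite -(mulKmx uA B) AB1 mulmx1.
Qed.

Lemma lift_eq0 m (k : 'I_m.+2) (i : 'I_m.+1) :
  k != ord0 -> (lift k i == ord0) = (i == ord0).
Proof.
move=> k_neq0; rewrite -!val_eqE /= /bump addn_eq0 eqb0 -ltnNge.
by case: (val i) => [|?]; rewrite ?andbF // andbT lt0n.
Qed.

Lemma gram_mulmx (R : rcfType) m n p (A : 'M[R]_(m, n)) (B : 'M_(n, p)) :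
  gram (A *m B) = B^T *m gram A *m B.
Proof. by rewrite /gram trmx_mul !mulmxA. Qed.

Lemma gram_colsub (R : rcfType) m n p (f : 'I_p -> 'I_n) (S : 'M[R]_(m, n)) :
  gram (colsub f S) = mxsub f f (gram S).
Proof.
by apply/matrixP => i j; rewrite !mxE; apply: eq_bigr => r _; rewrite !mxE.
Qed.

Definition equi_mx {R : nzRingType} n (b : R) : 'M[R]_n :=
  \matrix_(i, j) (if i == j then 1 else b).

Section EquicorrelationMatrix.
Variable R : fieldType.

Lemma equi_mxE n (b : R) : equi_mx n b = (1 - b)%:M + b *: const_mx 1.
Proof.
by apply/matrixP => i j; rewrite !mxE; case: eqP => _; rewrite ?mulr1n ?mulr0n; ring.
Qed.

Lemma mul_const_mx1 n :
  (const_mx 1 : 'M[R]_n) *m const_mx 1 = n%:R *: const_mx 1 :> 'M_n.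
Proof.
apply/matrixP => i j; rewrite !mxE (eq_bigr (fun _ => 1)) => [|k _]; last first.
  by rewrite !mxE mulr1.
by rewrite sumr_const card_ord mulr1.
Qed.

Lemma mulmx_equi_mx_inv n (b : R) : 1 - b != 0 -> 1 + b * n%:R / (1 - b) != 0 ->
  equi_mx n b *m ((1 - b)^-1%:M
     - (b / ((1 - b) ^+ 2 * (1 + b * n%:R / (1 - b)))) *: const_mx 1) = 1%:M.
Proof.
move=> b1_neq0 den_neq0.
have den : (1 - b + b * n%:R) != 0.
  move: den_neq0; rewrite -{1}(divff b1_neq0) -mulrDl mulf_eq0 invr_eq0 negb_or.
  by case/andP.
rewrite equi_mxE mulmxDl !mulmxBr mul_scalar_mx mul_mx_scalar -!scalemxAl
  -!scalemxAr mul_const_mx1 ?mul_scalar_mx.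
by apply/matrixP => i j; rewrite !mxE; case: eqP => _;
  rewrite ?mulr1n ?mulr0n; field; rewrite b1_neq0 den.
Qed.

End EquicorrelationMatrix.

Section UniformSimplex.
Variables (R : rcfType) (m : nat).
Local Notation n := m.+1.
Local Notation N := (n%:R : R).

(* [P0] on natural-number indices, so that column sums can be split along
   [index_iota]. *)
Definition P0_entry (r j : nat) : R :=
  if (r < j)%N then - simplex_a R n r / (n - r)%:R
  else if r == j then simplex_a R n r else 0.

Lemma P0E (i : 'I_n) (j : 'I_n.+1) : P0 R n i j = P0_entry i j.
Proof.
rewrite mxE /P0_entry; case: ifP => // /negbT; rewrite -leqNgt => nj.
by rewrite (leq_trans (ltn_ord i) nj).
Qed.

Lemma simplex_a_sqr r : (r < n)%N -> simplex_a R n r ^+ 2 =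
  (N - r%:R) * (N + 1) / (N * (N - r%:R + 1)).
Proof.
move=> rn; rewrite /simplex_a sqr_sqrtr; last by rewrite divr_ge0 ?mulr_ge0.
by rewrite -[(n - r).+1]addn1 -[n.+1]addn1 !natrD natrB // ltnW.
Qed.

Lemma simplex_a0 : simplex_a R n 0 = 1.
Proof. by rewrite /simplex_a subn0 divff ?sqrtr1 // mulf_neq0 ?pnatr_eq0. Qed.

Lemma sum_sqr_above_diag j : (j <= n)%N ->
  \sum_(0 <= r < j) (simplex_a R n r / (n - r)%:R) ^+ 2 =
  (N + 1) / (N * (N - j%:R + 1)) - N^-1.
Proof.
have N_gt0 : 0 < N := ltr0Sn _ _.
elim: j => [|j IH] jn.
  by rewrite big_geq //; field; rewrite !lt0r_neq0 //; lra.
have jN : j%:R + 1 <= N by rewrite natr1 ler_nat.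
rewrite big_nat_recr //= IH ?(ltnW jn) // expr_div_n simplex_a_sqr // natrB ?(ltnW jn) //.
by rewrite -natr1; field; rewrite !lt0r_neq0 //=; lra.
Qed.

Lemma P0_entry_dot_le j k : (j <= k)%N -> (k <= n)%N ->
  \sum_(r < n) P0_entry r j * P0_entry r k = if j == k then 1 else - N^-1.
Proof.
move=> jk kn; have jn := leq_trans jk kn; have N_gt0 : 0 < N := ltr0Sn _ _.
rewrite -(big_mkord xpredT (fun r => P0_entry r j * P0_entry r k)).
rewrite (big_cat_nat (leq0n j) jn) /=.
rewrite (eq_big_nat _ _ (F2 := fun r => (simplex_a R n r / (n - r)%:R) ^+ 2)); last first.
  by move=> r /andP[_ rj]; rewrite /P0_entry rj (leq_trans rj jk) expr2; ring.
rewrite sum_sqr_above_diag //.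
have [jn'|nj] := ltnP j n; last first.
  have ej : j = n by apply/eqP; rewrite eqn_leq jn nj.
  have ek : k = n by apply/eqP; rewrite eqn_leq kn -ej jk.
  rewrite ej ek eqxx big_geq // addr0 subrr add0r; field.
  by rewrite addrC natr1 pnatr_eq0.
rewrite big_ltn // (eq_big_nat _ _ (F2 := fun r => 0)); last first.
  by move=> r /andP[jr _]; rewrite /P0_entry ltnNge (ltnW jr) /= (gtn_eqF jr) mul0r.
rewrite big1 // addr0 /P0_entry ltnn eqxx.
have jN : j%:R + 1 <= N by rewrite natr1 ler_nat.
case: (ltngtP j k) jk => [jk|//|_] _.
  rewrite mulrA mulrN -expr2 simplex_a_sqr // natrB ?(ltnW jn') //.
  by field; rewrite !lt0r_neq0 //=; lra.
by rewrite -expr2 simplex_a_sqr //; field; rewrite !lt0r_neq0 //=; lra.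
Qed.

Lemma P0_col_dot j k :
  \sum_r P0 R n r j * P0 R n r k = if j == k then 1 else - N^-1.
Proof.
under eq_bigr do rewrite !P0E.
have [jk|kj] := leqP j k; first by rewrite P0_entry_dot_le // -ltnS ltn_ord.
rewrite eq_sym -P0_entry_dot_le ?(ltnW kj) //; last by rewrite -ltnS ltn_ord.
by apply: eq_bigr => r _; rewrite mulrC.
Qed.

Lemma P0_row0 j : P0 R n ord0 j = if j == ord0 then 1 else - N^-1.
Proof.
rewrite P0E /P0_entry lt0n simplex_a0 subn0 mulN1r -[j == ord0]/(j == 0%N :> nat).
by case: (j : nat).
Qed.

Lemma P0_col0 i : P0 R n i ord0 = (i == ord0)%:R.
Proof.
rewrite P0E /P0_entry -[i == ord0]/(i == 0%N :> nat).
by case: (i : nat); rewrite ?simplex_a0.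
Qed.

Lemma P0_row_sum i : \sum_j P0 R n i j = 0.
Proof.
under eq_bigr do rewrite P0E.
rewrite -(big_mkord xpredT (P0_entry i)) (big_cat_nat (leq0n i)) /=; last first.
  exact: leqW (ltnW (ltn_ord i)).
rewrite big1_seq ?add0r => [|r]; last first.
  rewrite mem_index_iota /P0_entry => /andP[_ ri].
  by rewrite ltnNge (ltnW ri) (gtn_eqF ri).
rewrite big_ltn ?(leqW (ltn_ord i)) // {1}/P0_entry ltnn eqxx.
rewrite (eq_big_nat _ _ (F2 := fun=> - simplex_a R n i / (n - i)%:R)); last first.
  by move=> r /andP[ir _]; rewrite /P0_entry ir.
rewrite sumr_const_nat -mulr_natr subSS.
by field; rewrite pnatr_eq0 -lt0n subn_gt0.
Qed.

End UniformSimplex.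

Section SimplexConstants.
Variables (R : rcfType) (n : nat) (delta : R).
Hypothesis n_ge2 : (2 <= n)%N.
Local Notation N := (n%:R : R).
Local Notation al := (alpha n delta).
Local Notation D := (N ^+ 2 * delta ^+ 2 - 2 * N * delta + N ^+ 2).

Let N_gt0 : 0 < N. Proof. by rewrite ltr0n (leq_trans _ n_ge2). Qed.

Lemma D_gt0 : 0 < D.
Proof.
have N_ge2 : 2%:R <= N by rewrite ler_nat.
have := sqr_ge0 (N * delta - 1); nra.
Qed.

(* [D != 0] in the normal form produced by [field]. *)
Let D_neq0 : (N * delta) ^+ 2 - 2 * N * delta + N ^+ 2 != 0.
Proof. by rewrite exprMn lt0r_neq0 ?D_gt0. Qed.

Lemma alpha_sqr : al ^+ 2 = N ^+ 2 / D.
Proof. by rewrite /alpha expr_div_n sqr_sqrtr // ltW // D_gt0. Qed.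

Lemma alpha_sqr_col_norm : al ^+ 2 * (1 - 2 * delta / N + delta ^+ 2) = 1.
Proof. by rewrite alpha_sqr; field; rewrite D_neq0 lt0r_neq0. Qed.

Lemma betaE : beta n delta = al ^+ 2 * (delta ^+ 2 - 2 * delta / N - N^-1).
Proof. by rewrite /beta; field; rewrite lt0r_neq0. Qed.

Lemma one_sub_beta : 1 - beta n delta = N * (N + 1) / D.
Proof. by rewrite /beta alpha_sqr; field; rewrite D_neq0 lt0r_neq0. Qed.

Lemma one_sub_beta_gt0 : 0 < 1 - beta n delta.
Proof. by rewrite one_sub_beta divr_gt0 ?D_gt0 // mulr_gt0 ?addr_gt0. Qed.

Lemma sherman_morrison_denom :
  1 + beta n delta * N / (1 - beta n delta) = (1 - N * delta) ^+ 2 / (N + 1).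
Proof.
rewrite one_sub_beta.
have -> : beta n delta = 1 - N * (N + 1) / D by rewrite -one_sub_beta; ring.
by field; rewrite D_neq0 !lt0r_neq0 ?addr_gt0.
Qed.

Lemma sherman_morrison_denom_neq0 : delta != N^-1 ->
  1 + beta n delta * N / (1 - beta n delta) != 0.
Proof.
move=> delta_neq; have N_neq0 := lt0r_neq0 N_gt0.
rewrite sherman_morrison_denom mulf_neq0 //; last first.
  by rewrite invr_eq0 lt0r_neq0 ?addr_gt0.
rewrite sqrf_eq0 subr_eq0 eq_sym; apply: contra delta_neq => /eqP Ndelta1.
by rewrite -(mulKf N_neq0 delta) Ndelta1 mulr1.
Qed.

End SimplexConstants.

Section PerturbedSimplex.
Variables (R : rcfType) (m : nat) (delta : R).
Hypothesis m_gt0 : (0 < m)%N.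
Local Notation n := m.+1.
Local Notation N := (n%:R : R).
Local Notation al := (alpha n delta).
Local Notation Pd := (Pdelta n delta).
Local Notation c := (- alpha n delta * (1 - delta * n%:R)).

Definition col_scale (j : 'I_n.+1) : R := if j == ord0 then 1 else al.
Definition col_shift (j : 'I_n.+1) : R := if j == ord0 then 0 else delta.

Lemma PdeltaE i j :
  Pd i j = col_scale j * (P0 R n i j + if i == ord0 then col_shift j else 0).
Proof.
rewrite mxE /col_scale /col_shift -[i == ord0]/(i == 0%N :> nat).
by case: eqP => _; first by case: eqP; rewrite mul1r addr0.
Qed.

Lemma Pdelta_col_dot j k : \sum_r Pd r j * Pd r k =
  col_scale j * col_scale k * ((if j == k then 1 else - N^-1)
    + col_shift j * P0 R n ord0 k + col_shift k * P0 R n ord0 j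
    + col_shift j * col_shift k).
Proof.
rewrite (eq_bigr (fun r => col_scale j * col_scale k * (P0 R n r j * P0 R n r k
  + if r == ord0 then col_shift j * P0 R n r k + col_shift k * P0 R n r j
                      + col_shift j * col_shift k else 0))); last first.
  by move=> r _; rewrite !PdeltaE; case: eqP => _; ring.
rewrite -mulr_sumr big_split /= P0_col_dot (bigD1 ord0) //= big1 ?addr0 ?addrA //.
by move=> r /negbTE ->.
Qed.

Lemma gram_Pdelta : gram Pd =
  \matrix_(j, k) (if j == k then 1
                  else if (j == ord0) || (k == ord0) then lambda n delta
                  else beta n delta).
Proof.
apply/matrixP => j k; rewrite mxE [RHS]mxE.
under eq_bigr do rewrite mxE.
rewrite Pdelta_col_dot !P0_row0 /col_scale /col_shift.
case: (unliftP ord0 j) => [j'|] ->; case: (unliftP ord0 k) => [k'|] ->;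
  rewrite ?eqxx ?(inj_eq lift_inj) /=.
- case: eqP => _; last by rewrite betaE //; ring.
  by rewrite -[in RHS](alpha_sqr_col_norm (n := n) delta m_gt0); ring.
- by rewrite /lambda; ring.
- by rewrite /lambda; ring.
- by ring.
Qed.

Lemma Pdelta_col0 i : Pd i ord0 = (i == ord0)%:R.
Proof.
by rewrite PdeltaE /col_scale /col_shift eqxx mul1r P0_col0; case: eqP; rewrite addr0.
Qed.

Lemma Pdelta_row_sum i : \sum_j Pd i j = (1 + c) * (i == ord0)%:R.
Proof.
have P0_row_sum_lift : \sum_j P0 R n i (lift ord0 j) = - (i == ord0)%:R.
  by apply/eqP; rewrite -addr_eq0 -P0_col0 addrC -big_ord_recl P0_row_sum.
rewrite big_ord_recl Pdelta_col0.
under eq_bigr do rewrite PdeltaE /col_scale /col_shift /=.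
rewrite -mulr_sumr big_split /= P0_row_sum_lift sumr_const card_ord.
by case: eqP => _; rewrite /= ?mul0rn; ring.
Qed.

Lemma mulmx_MinvE p (A : 'M[R]_(p, n)) i j : (A *m Minv n delta) i j =
  if j == ord0 then c * A i ord0 - \sum_r A i (lift ord0 r) else A i j.
Proof.
rewrite mxE big_ord_recl mxE /=.
case: (unliftP ord0 j) => [j'|] -> /=.
  rewrite mulr0 add0r (bigD1 j') //= !mxE /= eqxx mulr1 big1 ?addr0 //.
  by move=> r r_neq; rewrite mxE /= (inj_eq lift_inj) (negbTE r_neq) mulr0.
rewrite mulrC -sumrN; congr (_ + _).
by apply: eq_bigr => r _; rewrite mxE /= mulrN1.
Qed.

Lemma TmatE (k : 'I_n.+1) i j : Tmat delta k i j = Pd i (lift k j).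
Proof. exact: mxE. Qed.

Lemma Tmat_colsub (k : 'I_n.+1) : Tmat delta k = colsub (lift k) Pd.
Proof. by apply/matrixP => i j; rewrite !mxE. Qed.

Lemma gram_Tmat (k : 'I_n.+1) : k != ord0 ->
  gram (Tmat delta k) =
  \matrix_(i, j) (if i == j then 1
                  else if (i == 0 :> nat) || (j == 0 :> nat) then lambda n delta
                  else beta n delta).
Proof.
move=> k_neq0; rewrite Tmat_colsub gram_colsub gram_Pdelta.
by apply/matrixP => i j; rewrite !mxE (inj_eq lift_inj) !lift_eq0.
Qed.

Lemma gram_colsub_Pdelta p (f : 'I_p -> 'I_n.+1) :
  injective f -> (forall j, f j != ord0) ->
  gram (colsub f Pd) = equi_mx p (beta n delta).
Proof.
move=> f_inj f_neq0; rewrite gram_colsub gram_Pdelta.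
by apply/matrixP => i j; rewrite !mxE (inj_eq f_inj) !(negbTE (f_neq0 _)).
Qed.

Lemma gram_Bmat : gram (Bmat n delta) = equi_mx n (beta n delta).
Proof.
rewrite -[Bmat n delta]/(Tmat delta ord0) Tmat_colsub gram_colsub_Pdelta //.
exact: lift_inj.
Qed.

Definition removed_first (k : 'I_n.+1) (j : 'I_n) : 'I_n.+1 :=
  if j == ord0 then k else lift k j.

Lemma Tmat_mulmx_Minv (k : 'I_n.+1) : k != ord0 ->
  Tmat delta k *m Minv n delta = colsub (removed_first k) Pd.
Proof.
move=> k_neq0; have lift_k0 : lift k ord0 = ord0 by apply/eqP; rewrite lift_eq0.
apply/matrixP => i j; rewrite mulmx_MinvE !TmatE [RHS]mxE /removed_first.
case: eqP => _ //; under eq_bigr do rewrite TmatE.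
have := Pdelta_row_sum i; rewrite (bigD1_ord k) //= big_ord_recl lift_k0 !Pdelta_col0.
by move=> /(canRL (addrK _)) ->; ring.
Qed.

Lemma removed_first_inj (k : 'I_n.+1) : injective (removed_first k).
Proof.
move=> i j; rewrite /removed_first.
case: (eqVneq i ord0) => [->|_]; case: (eqVneq j ord0) => [->|_] //.
- by move=> /eqP; rewrite (negbTE (neq_lift _ _)).
- by move=> /eqP; rewrite eq_sym (negbTE (neq_lift _ _)).
- exact: lift_inj.
Qed.

Lemma gram_Tmat_mulmx_Minv (k : 'I_n.+1) : k != ord0 ->
  gram (Tmat delta k *m Minv n delta) = equi_mx n (beta n delta).
Proof.
move=> k_neq0; rewrite Tmat_mulmx_Minv // gram_colsub_Pdelta //.
  exact: removed_first_inj.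
move=> j; rewrite /removed_first.
by case: ifP => [//|/negbT]; rewrite lift_eq0.
Qed.

End PerturbedSimplex.

Theorem lemma10 (R : rcfType) (n : nat) (delta : R) :
  (2 <= n)%N -> 0 <= delta -> delta < n%:R^-1 ->
  (* (i) *)
  (forall k : 'I_n.+1, k != ord0 ->
     gram (Tmat delta k) =
     \matrix_(i < n, j < n)
        (if i == j then 1
         else if (i == 0 :> nat) || (j == 0 :> nat) then lambda n delta
         else beta n delta)) /\
  (* (ii) *)
  (gram (Bmat n delta) \in unitmx /\
   invmx (gram (Bmat n delta)) =
     (1 - beta n delta)^-1%:M
     - (beta n delta / ((1 - beta n delta) ^+ 2 *
           (1 + beta n delta * n%:R / (1 - beta n delta))))
       *: const_mx 1) /\
  (* (iii) *)
  (forall k : 'I_n.+1, k != ord0 ->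
     gram (Tmat delta k) \in unitmx /\
     invmx (gram (Tmat delta k)) =
       Minv n delta *m invmx (gram (Bmat n delta)) *m (Minv n delta)^T).
Proof.
case: n => [//|m] m_gt0 _ delta_lt; rewrite gram_Bmat //.
have [unitB invB] := mulmx1_invmx (mulmx_equi_mx_inv
  (lt0r_neq0 (one_sub_beta_gt0 delta m_gt0))
  (sherman_morrison_denom_neq0 m_gt0 (negbT (lt_eqF delta_lt)))).
split; first exact: gram_Tmat.
split=> // k k_neq0; apply: mulmx1_invmx.
have congr_B : (Minv m.+1 delta)^T *m gram (Tmat delta k) *m Minv m.+1 delta
               = equi_mx m.+1 (beta m.+1 delta).
  by rewrite -gram_mulmx gram_Tmat_mulmx_Minv.
rewrite !mulmxA; apply: mulmx1C.
by rewrite mulmxA [X in X *m _]mulmxA congr_B mulmxV.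
Qed.
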